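(* Let $X$ be a real Hilbert space, let $\alpha_1,\alpha_2\in\mathbb{R}$, let $\beta_1,\beta_2>0$, suppose $\alpha_1+\beta_1>0$ and $\alpha_2+\beta_2>0$, and suppose that either $\tfrac{\beta_1\beta_2}{(\alpha_1+\beta_1)(\alpha_2+\beta_2)}<1$ or $\max\big\{\tfrac{\beta_1}{\alpha_1+\beta_1},\tfrac{\beta_2}{\alpha_2+\beta_2}\big\}=1$. Set $\kappa=(\alpha_1+\beta_1)(\alpha_2+\beta_2)$ and $$\theta=\begin{cases}\dfrac{\beta_1\alpha_2+\beta_2\alpha_1}{\alpha_1\alpha_2+\alpha_1\beta_2+\alpha_2\beta_1},&\text{if }\tfrac{\beta_1\beta_2}{(\alpha_1+\beta_1)(\alpha_2+\beta_2)}<1;\\[2mm] 1,&\text{if }\max\big\{\tfrac{\beta_1}{\alpha_1+\beta_1},\tfrac{\beta_2}{\alpha_2+\beta_2}\big\}=1.\end{cases}$$ Suppose $R_1\colon X\to X$ admits an $(\alpha_1,\beta_1)$-I-N decomposition and $R_2\colon X\to X$ admits an $(\alpha_2,\beta_2)$-I-N decomposition. Then $\theta\in\left]0,+\infty\right[$ and there exists a nonexpansive $N\colon X\to X$ such that $R_2R_1=\kappa(1-\theta)\mathrm{Id}+\kappa\theta N$, i.e., $R_2R_1$ is $\kappa$-scaled $\theta$-conically nonexpansive.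
   Context: For $(\alpha,\beta)\in\mathbb{R}\times[0,\infty[$, an operator $R\colon X\to X$ admits an $(\alpha,\beta)$-I-N (Identity-Nonexpansive) decomposition if there exists a nonexpansive ($1$-Lipschitz) $N\colon X\to X$ with $R=\alpha\mathrm{Id}+\beta N$. *)

From Stdlib Require Import Reals.
Open Scope R_scope.

Record RealHilbert := {
  hcar :> Type;
  hzero : hcar;
  hadd : hcar -> hcar -> hcar;
  hopp : hcar -> hcar;
  hscal : R -> hcar -> hcar;
  hinner : hcar -> hcar -> R;
  hadd_assoc : forall x y z, hadd x (hadd y z) = hadd (hadd x y) z;
  hadd_comm : forall x y, hadd x y = hadd y x;
  hadd_0 : forall x, hadd x hzero = x;
  hadd_opp : forall x, hadd x (hopp x) = hzero;
  hscal_assoc : forall a b x, hscal a (hscal b x) = hscal (a * b) x;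
  hscal_1 : forall x, hscal 1 x = x;
  hscal_distr_v : forall a x y, hscal a (hadd x y) = hadd (hscal a x) (hscal a y);
  hscal_distr_s : forall a b x, hscal (a + b) x = hadd (hscal a x) (hscal b x);
  hinner_sym : forall x y, hinner x y = hinner y x;
  hinner_add_l : forall x y z, hinner (hadd x y) z = hinner x z + hinner y z;
  hinner_scal_l : forall a x y, hinner (hscal a x) y = a * hinner x y;
  hinner_pos : forall x, 0 <= hinner x x;
  hinner_def : forall x, hinner x x = 0 -> x = hzero;
  hcomplete : forall u : nat -> hcar,
    (forall eps, eps > 0 -> exists N, forall m n, (m >= N)%nat -> (n >= N)%nat ->
       sqrt (hinner (hadd (u m) (hopp (u n))) (hadd (u m) (hopp (u n)))) < eps) ->
    exists l, forall eps, eps > 0 -> exists N, forall n, (n >= N)%nat ->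
       sqrt (hinner (hadd (u n) (hopp l)) (hadd (u n) (hopp l))) < eps
}.

Arguments hzero {r}.
Arguments hadd {r}.
Arguments hopp {r}.
Arguments hscal {r}.
Arguments hinner {r}.

Definition hnorm {X : RealHilbert} (x : X) : R := sqrt (hinner x x).

Definition nonexpansive {X : RealHilbert} (N : X -> X) : Prop :=
  forall x y : X, hnorm (hadd (N x) (hopp (N y))) <= hnorm (hadd x (hopp y)).

Definition IN_decomp {X : RealHilbert} (alpha beta : R) (Rop : X -> X) : Prop :=
  exists N : X -> X, nonexpansive N /\
    forall x : X, Rop x = hadd (hscal alpha x) (hscal beta (N x)).

From Stdlib Require Import Reals Lra Psatz.
Open Scope R_scope.

(* For b > 0, R admits an (a,b)-I-N decomposition exactly when R - a Id is
   b-Lipschitz. So the claim concerns u = x - y, v = R1 x - R1 y and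
   w = R2 (R1 x) - R2 (R1 y): from |v - a1 u| <= b1 |u| and |w - a2 v| <= b2 |v|
   deduce |w - kappa (1 - theta) u| <= kappa theta |u|. Squared, this is an
   inequality between Gram entries of u, v, w; with D = kappa - b1 b2 > 0 it is a
   nonnegative combination of the two hypotheses and of
   |kappa a1 b2 u - (b2 D + a2^2 b1) v + a2 b1 w|^2 >= 0.
   If b1 b2 >= kappa, the alternative hypothesis forces a1 = a2 = 0, and the claim
   is just that Lipschitz constants multiply under composition. *)

Definition comp_theta (a1 b1 a2 b2 : R) : R :=
  (b1 * a2 + b2 * a1) / (a1 * a2 + a1 * b2 + a2 * b1).

Lemma comp_theta_pos (a1 b1 a2 b2 : R) :
  0 < b1 -> 0 < b2 -> 0 < a1 + b1 -> 0 < a2 + b2 ->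
  b1 * b2 < (a1 + b1) * (a2 + b2) -> 0 < comp_theta a1 b1 a2 b2.
Proof.
  intros hb1 hb2 hs1 hs2 hD. unfold comp_theta.
  apply Rdiv_lt_0_compat; [| nra].
  (* AM-GM: b1 (a2 + b2) + b2 (a1 + b1) >= 2 sqrt (b1 b2 kappa) > 2 b1 b2 *)
  assert (0 <= (b1 * (a2 + b2) - b2 * (a1 + b1)) ^ 2) by apply pow2_ge_0.
  assert (0 < b1 * (a2 + b2) + b2 * (a1 + b1)) by nra.
  nra.
Qed.

Section RealHilbertSpace.

Variable X : RealHilbert.

Local Notation hsub x y := (hadd x (hopp y)).

Lemma hadd_0l (x : X) : hadd hzero x = x.
Proof. rewrite hadd_comm; apply hadd_0. Qed.

Lemma hscal_0 (x : X) : hscal 0 x = hzero.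
Proof.
  transitivity (hadd (hscal 0 x) (hadd (hscal 0 x) (hopp (hscal 0 x)))).
  - rewrite hadd_opp, hadd_0; reflexivity.
  - rewrite hadd_assoc, <- hscal_distr_s, Rplus_0_r, hadd_opp; reflexivity.
Qed.

Lemma hscal_cancel (a : R) (x : X) : hadd (hscal a x) (hscal (- a) x) = hzero.
Proof. rewrite <- hscal_distr_s, Rplus_opp_r; apply hscal_0. Qed.

Lemma hopp_scal (x : X) : hopp x = hscal (-1) x.
Proof.
  transitivity (hadd (hadd (hopp x) (hscal 1 x)) (hscal (-1) x)).
  - rewrite <- hadd_assoc, hscal_cancel, hadd_0; reflexivity.
  - rewrite hscal_1, (hadd_comm _ (hopp x)), hadd_opp, hadd_0l; reflexivity.
Qed.

Lemma hsub_add (x y x' y' : X) :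
  hsub (hadd x y) (hadd x' y') = hadd (hsub x x') (hsub y y').
Proof.
  rewrite !hopp_scal, hscal_distr_v, <- !hadd_assoc; f_equal.
  rewrite !hadd_assoc; f_equal; apply hadd_comm.
Qed.

Lemma hsub_scal (t : R) (x y : X) :
  hsub (hscal t x) (hscal t y) = hscal t (hsub x y).
Proof. rewrite !hopp_scal, hscal_distr_v, !hscal_assoc, Rmult_comm; reflexivity. Qed.

Lemma hinner_add_r (x y z : X) : hinner x (hadd y z) = hinner x y + hinner x z.
Proof. rewrite hinner_sym, hinner_add_l, (hinner_sym _ y), (hinner_sym _ z); reflexivity. Qed.

Lemma hinner_scal_r (t : R) (x y : X) : hinner x (hscal t y) = t * hinner x y.
Proof. rewrite hinner_sym, hinner_scal_l, (hinner_sym _ y); reflexivity. Qed.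

Lemma hnorm_scal (t : R) (x : X) : hnorm (hscal t x) = Rabs t * hnorm x.
Proof.
  unfold hnorm. rewrite hinner_scal_l, hinner_scal_r, <- Rmult_assoc,
    sqrt_mult_alt by apply Rle_0_sqr.
  f_equal; apply sqrt_Rsqr_abs.
Qed.

Lemma hnorm_le_scal_iff (t : R) (x y : X) : 0 <= t ->
  hnorm x <= t * hnorm y <-> hinner x x <= t ^ 2 * hinner y y.
Proof.
  intro ht. unfold hnorm.
  rewrite <- (sqrt_pow2 t ht) at 1. rewrite <- sqrt_mult_alt by (apply pow2_ge_0).
  split; [apply sqrt_le_0 | apply sqrt_le_1_alt]; auto using hinner_pos.
  apply Rmult_le_pos; [apply pow2_ge_0 | apply hinner_pos].
Qed.

Definition lipschitz (L : R) (T : X -> X) : Prop :=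
  forall x y, hnorm (hsub (T x) (T y)) <= L * hnorm (hsub x y).

Lemma lipschitz_comp (L1 L2 : R) (T1 T2 : X -> X) : 0 <= L2 ->
  lipschitz L1 T1 -> lipschitz L2 T2 -> lipschitz (L2 * L1) (fun x => T2 (T1 x)).
Proof.
  intros hL2 H1 H2 x y. eapply Rle_trans; [apply H2 |].
  rewrite Rmult_assoc. apply Rmult_le_compat_l; auto.
Qed.

Lemma IN_decomp_iff_lipschitz (a b : R) (T : X -> X) : 0 < b ->
  IN_decomp a b T <-> lipschitz b (fun x => hadd (T x) (hscal (- a) x)).
Proof.
  intro hb. split.
  - intros [N [HN HT]] x y.
    assert (ES : forall z, hadd (T z) (hscal (- a) z) = hscal b (N z)).
    { intro z. rewrite HT, (hadd_comm _ (hscal a z)), <- hadd_assoc, hscal_cancel, hadd_0.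
      reflexivity. }
    rewrite !ES, hsub_scal, hnorm_scal, Rabs_pos_eq by lra.
    apply Rmult_le_compat_l; [lra | apply HN].
  - intros HL. exists (fun x => hscal (/ b) (hadd (T x) (hscal (- a) x))). split.
    + intros x y.
      rewrite hsub_scal, hnorm_scal, Rabs_pos_eq by (left; apply Rinv_0_lt_compat; lra).
      apply (Rmult_le_reg_l b); [lra |].
      rewrite <- Rmult_assoc, Rinv_r, Rmult_1_l by lra. apply HL.
    + intro x. symmetry.
      rewrite hscal_assoc, Rinv_r, hscal_1, hadd_assoc, (hadd_comm _ (hscal a x)),
        <- hadd_assoc, hscal_cancel, hadd_0 by lra.
      reflexivity.
Qed.

Lemma IN_decomp_0_iff_lipschitz (b : R) (T : X -> X) : 0 < b ->
  IN_decomp 0 b T <-> lipschitz b T.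
Proof.
  intro hb. rewrite IN_decomp_iff_lipschitz by exact hb.
  assert (E : forall x, hadd (T x) (hscal (- 0) x) = T x).
  { intro x. rewrite Ropp_0, hscal_0, hadd_0; reflexivity. }
  unfold lipschitz. setoid_rewrite E. reflexivity.
Qed.

Lemma IN_bound_chain (a1 b1 a2 b2 : R) (u v w : X) :
  0 < b1 -> 0 < b2 -> 0 < a1 + b1 -> 0 < a2 + b2 ->
  b1 * b2 < (a1 + b1) * (a2 + b2) ->
  hnorm (hadd v (hscal (- a1) u)) <= b1 * hnorm u ->
  hnorm (hadd w (hscal (- a2) v)) <= b2 * hnorm v ->
  hnorm (hadd w (hscal (- ((a1 + b1) * (a2 + b2) * (1 - comp_theta a1 b1 a2 b2))) u))
    <= (a1 + b1) * (a2 + b2) * comp_theta a1 b1 a2 b2 * hnorm u.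
Proof.
  intros hb1 hb2 hs1 hs2 hD H1 H2.
  pose proof (comp_theta_pos a1 b1 a2 b2 hb1 hb2 hs1 hs2 hD) as hth.
  set (kappa := (a1 + b1) * (a2 + b2)) in *.
  set (th := comp_theta a1 b1 a2 b2) in *.
  set (D := a1 * a2 + a1 * b2 + a2 * b1).
  set (M := b2 * D + a2 ^ 2 * b1).
  assert (hDpos : 0 < D) by (unfold D, kappa in *; nra).
  assert (hM : 0 < M) by (unfold M; nra).
  assert (he : 0 <= kappa * th) by (left; apply Rmult_lt_0_compat; nra).
  rewrite hnorm_le_scal_iff in H1, H2 |- * by lra.
  pose proof (hinner_pos X
    (hadd (hadd (hscal (kappa * a1 * b2) u) (hscal (- M) v)) (hscal (a2 * b1) w))) as Hz.
  rewrite !hinner_add_l, !hinner_add_r, !hinner_scal_l, !hinner_scal_r,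
    (hinner_sym _ v u), (hinner_sym _ w u), (hinner_sym _ w v) in *.
  set (U := hinner u u) in *. set (V := hinner v v) in *. set (W := hinner w w) in *.
  set (p := hinner u v) in *. set (q := hinner v w) in *. set (r := hinner u w) in *.
  set (c := kappa * (1 - th)). set (e := kappa * th).
  assert (Hcert :
    b1 * b2 * D * (W - 2 * c * r + (c ^ 2 - e ^ 2) * U)
    = kappa * b2 * M * (V - 2 * a1 * p + (a1 ^ 2 - b1 ^ 2) * U)
      + b1 * M * (W - 2 * a2 * q + (a2 ^ 2 - b2 ^ 2) * V)
      - ((kappa * a1 * b2) ^ 2 * U + M ^ 2 * V + (a2 * b1) ^ 2 * W
         - 2 * kappa * a1 * b2 * M * p + 2 * kappa * a1 * b2 * a2 * b1 * r
         - 2 * M * a2 * b1 * q)).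
  { unfold c, e, th, comp_theta, M, kappa, D in *. field. lra. }
  assert (0 <= kappa * b2 * M * (b1 ^ 2 * U - (V - 2 * a1 * p + a1 ^ 2 * U))).
  { apply Rmult_le_pos; [apply Rmult_le_pos |]; nra. }
  assert (0 <= b1 * M * (b2 ^ 2 * V - (W - 2 * a2 * q + a2 ^ 2 * V))).
  { apply Rmult_le_pos; nra. }
  apply (Rmult_le_reg_l (b1 * b2 * D)); [repeat apply Rmult_lt_0_compat; assumption |].
  lra.
Qed.

Lemma IN_decomp_comp (a1 b1 a2 b2 : R) (R1 R2 : X -> X) :
  0 < b1 -> 0 < b2 -> 0 < a1 + b1 -> 0 < a2 + b2 ->
  b1 * b2 < (a1 + b1) * (a2 + b2) ->
  IN_decomp a1 b1 R1 -> IN_decomp a2 b2 R2 ->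
  IN_decomp ((a1 + b1) * (a2 + b2) * (1 - comp_theta a1 b1 a2 b2))
            ((a1 + b1) * (a2 + b2) * comp_theta a1 b1 a2 b2)
            (fun x => R2 (R1 x)).
Proof.
  intros hb1 hb2 hs1 hs2 hD HR1 HR2.
  pose proof (comp_theta_pos a1 b1 a2 b2 hb1 hb2 hs1 hs2 hD).
  rewrite IN_decomp_iff_lipschitz in HR1, HR2 |- * by (try apply Rmult_lt_0_compat; nra).
  intros x y. specialize (HR1 x y). specialize (HR2 (R1 x) (R1 y)).
  cbv beta in HR1, HR2 |- *.
  rewrite !hsub_add, !hsub_scal in HR1, HR2 |- *.
  eapply IN_bound_chain; eassumption.
Qed.

Lemma IN_decomp_comp_0 (b1 b2 : R) (R1 R2 : X -> X) : 0 < b1 -> 0 < b2 ->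
  IN_decomp 0 b1 R1 -> IN_decomp 0 b2 R2 -> IN_decomp 0 (b2 * b1) (fun x => R2 (R1 x)).
Proof.
  intros hb1 hb2.
  rewrite !IN_decomp_0_iff_lipschitz by (try apply Rmult_lt_0_compat; assumption).
  apply lipschitz_comp; lra.
Qed.

End RealHilbertSpace.

Lemma Rdiv_lt_1_iff (x y : R) : 0 < y -> x / y < 1 <-> x < y.
Proof.
  intro hy. split; intro H.
  - apply (Rmult_lt_reg_r (/ y)); [apply Rinv_0_lt_compat; lra |].
    rewrite Rinv_r by lra. exact H.
  - apply (Rmult_lt_reg_r y); [lra |]. unfold Rdiv.
    rewrite Rmult_assoc, Rinv_l, Rmult_1_r, Rmult_1_l by lra. exact H.
Qed.

Lemma Rdiv_le_1_iff (x y : R) : 0 < y -> x / y <= 1 <-> x <= y.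
Proof.
  intro hy. split; intro H.
  - apply (Rmult_le_reg_r (/ y)); [apply Rinv_0_lt_compat; lra |].
    rewrite Rinv_r by lra. exact H.
  - apply (Rmult_le_reg_r y); [lra |]. unfold Rdiv.
    rewrite Rmult_assoc, Rinv_l, Rmult_1_r, Rmult_1_l by lra. exact H.
Qed.

Theorem mainTheorem7 (X : RealHilbert) (a1 a2 b1 b2 : R)
  (hb1 : 0 < b1) (hb2 : 0 < b2)
  (h1 : 0 < a1 + b1) (h2 : 0 < a2 + b2)
  (hcase : b1 * b2 / ((a1 + b1) * (a2 + b2)) < 1 \/
           Rmax (b1 / (a1 + b1)) (b2 / (a2 + b2)) = 1)
  (R1 R2 : X -> X)
  (hR1 : IN_decomp a1 b1 R1) (hR2 : IN_decomp a2 b2 R2) :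
  let kappa := (a1 + b1) * (a2 + b2) in
  let theta :=
    if Rlt_dec (b1 * b2 / ((a1 + b1) * (a2 + b2))) 1
    then (b1 * a2 + b2 * a1) / (a1 * a2 + a1 * b2 + a2 * b1)
    else 1 in
  0 < theta /\
  exists N : X -> X, nonexpansive N /\
    forall x : X, R2 (R1 x) =
      hadd (hscal (kappa * (1 - theta)) x) (hscal (kappa * theta) (N x)).
Proof.
  intros kappa theta.
  assert (hk : 0 < kappa) by (apply Rmult_lt_0_compat; assumption).
  subst theta. destruct (Rlt_dec (b1 * b2 / ((a1 + b1) * (a2 + b2))) 1) as [Hlt | Hge].
  - rewrite Rdiv_lt_1_iff in Hlt by exact hk.
    split.
    + exact (comp_theta_pos a1 b1 a2 b2 hb1 hb2 h1 h2 Hlt).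
    + exact (IN_decomp_comp X a1 b1 a2 b2 R1 R2 hb1 hb2 h1 h2 Hlt hR1 hR2).
  - (* kappa <= b1 b2 together with a1, a2 >= 0 forces a1 = a2 = 0. *)
    destruct hcase as [Hlt | Hmax]; [contradiction |].
    rewrite Rdiv_lt_1_iff in Hge by exact hk. apply Rnot_lt_le in Hge.
    pose proof (Rmax_l (b1 / (a1 + b1)) (b2 / (a2 + b2))) as M1.
    pose proof (Rmax_r (b1 / (a1 + b1)) (b2 / (a2 + b2))) as M2.
    rewrite Hmax, Rdiv_le_1_iff in M1, M2 by assumption.
    assert (a1 = 0 /\ a2 = 0) as [-> ->] by nra.
    split; [lra |].
    replace (kappa * (1 - 1)) with 0 by ring.
    replace (kappa * 1) with (b2 * b1) by (unfold kappa; ring).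
    exact (IN_decomp_comp_0 X b1 b2 R1 R2 hb1 hb2 hR1 hR2).
Qed.
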